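(* Let $R$ be a normal (integrally closed) noetherian integral domain which is a maximal subring of a ring $T$ and is integrally closed in $T$, and let $M$ be the crucial maximal ideal of the extension $R\subseteq T$. Then $(R:T)=0$ and $R_M$ is a discrete valuation ring.
   Context: All rings are commutative with $1\neq0$ and subrings are unital. A maximal subring is a proper subring maximal with respect to inclusion among proper subrings. The conductor is $(R:T)=\{x\in T\mid Tx\subseteq R\}$. If $R$ is a maximal subring of $T$, there is a unique maximal ideal $M$ of $R$ such that $R_M$ is a maximal subring of $T_M$ and $R_P=T_P$ for every prime ideal $P\neq M$ of $R$ (localizations at $R\setminus P$); this $M$ is called the crucial maximal ideal of the extension $R\subseteq T$. *)

From HB Require Import structures.
From mathcomp Require Import all_boot all_order all_algebra.
From mathcomp Require Import fraction.
Set Implicit Arguments. Unset Strict Implicit. Unset Printing Implicit Defensive.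
Import Order.TTheory GRing.Theory Num.Theory.
Local Open Scope ring_scope.

Definition is_ideal (A : comNzRingType) (I : A -> Prop) : Prop :=
  [/\ I 0, (forall x y, I x -> I y -> I (x + y)) & (forall a x, I x -> I (a * x))].

Definition is_prime_ideal (A : comNzRingType) (I : A -> Prop) : Prop :=
  [/\ is_ideal I, ~ I 1 & (forall a b, I (a * b) -> I a \/ I b)].

Definition is_maximal_ideal (A : comNzRingType) (I : A -> Prop) : Prop :=
  [/\ is_ideal I, ~ I 1 &
    (forall J : A -> Prop, is_ideal J -> (forall x, I x -> J x) ->
        J 1 \/ (forall x, J x -> I x))].

Definition noetherian (A : comNzRingType) : Prop :=
  forall I : nat -> A -> Prop, (forall n, is_ideal (I n)) ->
    (forall n x, I n x -> I n.+1 x) ->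
    exists N, forall n x, (N <= n)%N -> I n x -> I N x.

Definition normal_domain (R : idomainType) : Prop :=
  forall x : {fraction R}, integralOver (@FracField.tofrac R) x ->
    exists r : R, x = FracField.tofrac r.

(** The subring R of T is given by an injective ring morphism f : R -> T,
    i.e. R is identified with its image f(R). *)
Definition is_subring (T : comNzRingType) (S : T -> Prop) : Prop :=
  [/\ S 1, (forall x y, S x -> S y -> S (x - y)) & (forall x y, S x -> S y -> S (x * y))].

Definition maximal_subring (R : comNzRingType) (T : comNzRingType) (f : R -> T) : Prop :=
  (exists t : T, forall r, t <> f r) /\
  (forall S : T -> Prop, is_subring S -> (forall r, S (f r)) ->
     (forall t, S t) \/ (forall t, S t -> exists r, t = f r)).

Definition int_closed_in (R : comNzRingType) (T : comNzRingType) (f : R -> T) : Prop :=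
  forall t : T, integralOver f t -> exists r, t = f r.

Definition conductor (R : comNzRingType) (T : comNzRingType) (f : R -> T) (x : T) : Prop :=
  forall t : T, exists r, t * x = f r.

(** Localization of T at the multiplicative set U = f(R \ P), modelled
    concretely: an element of T_U is a fraction a/s with a in T and s in U;
    fractions a/s and b/s' are equal iff u (a s' - b s) = 0 for some u in U.
    Subsets of T_U are predicates X a s on numerator/denominator pairs
    (only pairs with s in U matter) that respect this equality. *)
Section Loc.
Variables (R T : comNzRingType) (f : R -> T) (P : R -> Prop).

Definition locU (u : T) : Prop := exists s, ~ P s /\ u = f s.

Definition loc_eq (a s b s' : T) : Prop :=
  exists u, locU u /\ u * (a * s' - b * s) = 0.

Definition loc_saturated (X : T -> T -> Prop) : Prop :=
  forall a s b s', locU s -> locU s' -> loc_eq a s b s' -> X a s -> X b s'.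

Definition loc_subring (X : T -> T -> Prop) : Prop :=
  [/\ loc_saturated X, X 1 1,
    (forall a s b s', locU s -> locU s' -> X a s -> X b s' ->
        X (a * s' - b * s) (s * s')) &
    (forall a s b s', locU s -> locU s' -> X a s -> X b s' ->
        X (a * b) (s * s'))].

(** The image of R_P inside T_P: fractions equal to f r / f s with s not in P. *)
Definition loc_R (a s : T) : Prop :=
  exists r s', locU s' /\ loc_eq a s (f r) s'.

Definition loc_equal : Prop := forall a s, locU s -> loc_R a s.

Definition loc_maximal_subring : Prop :=
  (exists a s, locU s /\ ~ loc_R a s) /\
  (forall X, loc_subring X -> (forall a s, locU s -> loc_R a s -> X a s) ->
     (forall a s, locU s -> X a s) \/ (forall a s, locU s -> X a s -> loc_R a s)).
End Loc.

Definition crucial_maximal_ideal (R T : comNzRingType) (f : R -> T) (M : R -> Prop) : Prop :=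
  [/\ is_maximal_ideal M, loc_maximal_subring f M &
    (forall P : R -> Prop, is_prime_ideal P -> ~ (forall x, P x <-> M x) ->
       loc_equal f P)].

Definition loc_in_frac (R : idomainType) (M : R -> Prop) (x : {fraction R}) : Prop :=
  exists a s : R, ~ M s /\ x = FracField.tofrac a / FracField.tofrac s.

Definition discrete_valuation (K : fieldType) (v : K -> int) : Prop :=
  [/\ (forall x y, x != 0 -> y != 0 -> v (x * y) = v x + v y),
      (forall x y, x != 0 -> y != 0 -> x + y != 0 -> Num.min (v x) (v y) <= v (x + y)) &
      (forall n : int, exists x, x != 0 /\ v x = n)].

Definition is_DVR_in_frac (R : idomainType) (A : {fraction R} -> Prop) : Prop :=
  exists v : {fraction R} -> int, discrete_valuation v /\
    (forall x, A x <-> (x = 0 \/ (x != 0 /\ 0 <= v x))).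

(* Since R is maximal and integrally closed in T, every nonzero c in R is regular on T
   (compare R with R + x^2 T when f c * x = 0); R being noetherian, any t in T with
   c t^k in R for all k is then integral over R, hence in R. A nonzero element c of the
   conductor would make every t in T of this kind, so (R : T) = 0.
   For t0 outside R, an associated prime P of the ideal {r | r t0 in R} must be the
   crucial ideal M, since R_P = T_P would put an element outside P into that ideal. This
   gives t outside R with M t in R, and by the same integrality argument M t is not in M:
   m t = s for some m in M and s outside M, so M R_M = m R_M. A noetherian local domain
   whose maximal ideal is principal and nonzero is a DVR: by Krull's intersection theorem
   every nonzero element is a unit times a power of m. *)

From HB Require Import structures.
From mathcomp Require Import all_boot all_order all_algebra.
From mathcomp Require Import fraction generic_quotient ring.
From Stdlib Require Import Classical ClassicalEpsilon.
Set Implicit Arguments. Unset Strict Implicit. Unset Printing Implicit Defensive.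
Import Order.TTheory GRing.Theory Num.Theory.
Local Open Scope ring_scope.

Lemma idealMr {A : comNzRingType} (I : A -> Prop) a x : is_ideal I -> I x -> I (x * a).
Proof. by case=> _ _ IM Ix; rewrite mulrC; apply: IM. Qed.

Lemma noetherian_maximal_member {A : comNzRingType} {J : Type}
    (F : J -> A -> Prop) (G : J -> Prop) (j0 : J) :
  noetherian A -> (forall j, is_ideal (F j)) -> G j0 ->
  exists2 j, G j & forall k, G k -> (forall x, F j x -> F k x) -> forall x, F k x -> F j x.
Proof.
move=> noethA idF Gj0; apply: NNPP => nomax.
have grow j : exists k, G j -> [/\ G k, (forall x, F j x -> F k x) & exists x, F k x /\ ~ F j x].
  case: (classic (G j)) => Gj; last by exists j.
  apply: NNPP => nogrow; apply: nomax; exists j => // k Gk sub x Fkx.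
  apply: NNPP => nFjx; apply: nogrow; exists k => _; split => //; by exists x.
pose next j := epsilon (inhabits j) (fun k => G j -> [/\ G k, (forall x, F j x -> F k x)
  & exists x, F k x /\ ~ F j x]).
have nextP j : G j -> [/\ G (next j), (forall x, F j x -> F (next j) x)
    & exists x, F (next j) x /\ ~ F j x].
  exact: epsilon_spec (grow j).
pose chain n := iter n next j0.
have Gchain n : G (chain n) by elim: n => //= n IH; case: (nextP _ IH).
have [N stable] := noethA (fun n => F (chain n)) (fun n => idF _)
  (fun n x => let: And3 _ sub _ := nextP _ (Gchain n) in sub x).
case: (nextP _ (Gchain N)) => _ _ [x [Fx nFx]].
exact: nFx (stable N.+1 x (leqnSn N) Fx).
Qed.

Lemma maximal_ideal_prime {A : comNzRingType} (M : A -> Prop) :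
  is_maximal_ideal M -> is_prime_ideal M.
Proof.
move=> [[M0 MD MM] M1 Mmax]; split => // a b Mab.
case: (classic (M a)) => Ma; [by left | right].
pose J x := exists m y, M m /\ x = m + y * a.
have idJ : is_ideal J.
  split; first by exists 0, 0; rewrite mul0r addr0.
  - move=> _ _ [m [y [Mm ->]]] [m' [y' [Mm' ->]]].
    by exists (m + m'), (y + y'); split; [apply: MD | ring].
  - move=> c _ [m [y [Mm ->]]].
    by exists (c * m), (c * y); split; [apply: MM | ring].
have MJ x : M x -> J x by exists x, 0; rewrite mul0r addr0.
case: (Mmax J idJ MJ) => [[m [y [Mm e]]] | JM].
- have -> : b = b * m + y * (a * b) by rewrite -[b in LHS]mulr1 e; ring.
  by apply: MD; apply: MM.
- by case: Ma; apply: JM; exists 0, 1; rewrite add0r mul1r.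
Qed.

Lemma maximal_ideal0_inv {A : comNzRingType} (M : A -> Prop) :
  is_maximal_ideal M -> (forall m, M m -> m = 0) -> forall r : A, r != 0 -> exists a, a * r = 1.
Proof.
move=> [_ _ Mmax] M0 r r0.
pose J x := exists a, x = a * r.
have idJ : is_ideal J.
  split; first by exists 0; rewrite mul0r.
  - by move=> _ _ [a ->] [b ->]; exists (a + b); rewrite mulrDl.
  - by move=> c _ [a ->]; exists (c * a); rewrite mulrA.
case: (Mmax J idJ) => [x /M0 -> | [a ea] | JM]; first by exists 0; rewrite mul0r.
  by exists a; rewrite ea.
by move: r0; rewrite (M0 r (JM r _)) ?eqxx //; exists 1; rewrite mul1r.
Qed.

Lemma associated_prime_exists {A : comNzRingType} (D : A -> Prop) :
  noetherian A -> is_ideal D -> ~ D 1 ->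
  exists2 c, ~ D c & is_prime_ideal (fun x => D (x * c)).
Proof.
move=> noethA idD nD1; have [D0 DD DM] := idD.
have idF c : is_ideal (fun x => D (x * c)).
  split; first by rewrite mul0r.
  - by move=> x y Dx Dy; rewrite mulrDl; apply: DD.
  - by move=> a x Dx; rewrite -mulrA; apply: DM.
have [c nDc cmax] := noetherian_maximal_member (G := fun c => ~ D c) noethA idF nD1.
exists c => //; split => //; first by rewrite mul1r.
move=> a b Dab; case: (classic (D (a * c))) => Dac; [by left | right].
have nDca : ~ D (c * a) by rewrite mulrC.
apply: (cmax _ nDca) => [x Dx|]; first by rewrite mulrA; apply: idealMr.
by rewrite (_ : b * (c * a) = a * b * c) //; ring.
Qed.

Lemma is_subring_image_add_principal {R T : comNzRingType} (f : {rmorphism R -> T}) (y : T) :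
  is_subring (fun z => exists r w, z = f r + y * w).
Proof.
split; first by exists 1, 0; rewrite rmorph1 mulr0 addr0.
- move=> _ _ [r [w ->]] [r' [w' ->]].
  by exists (r - r'), (w - w'); rewrite rmorphB mulrBr; ring.
- move=> _ _ [r [w ->]] [r' [w' ->]].
  exists (r * r'), (f r * w' + w * f r' + y * w * w').
  by rewrite rmorphM; ring.
Qed.

Lemma is_subring_eval_coef1_eq0 {R T : comNzRingType} (f : {rmorphism R -> T}) (t : T) :
  is_subring (fun z => exists2 q : {poly R}, q`_1 = 0 & z = (map_poly f q).[t]).
Proof.
split; first by exists 1; rewrite ?coefC ?rmorph1 ?hornerC.
- move=> _ _ [q q1 ->] [q' q1' ->]; exists (q - q').
    by rewrite coefB q1 q1' subrr.
  by rewrite rmorphB hornerD hornerN.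
- move=> _ _ [q q1 ->] [q' q1' ->]; exists (q * q').
    by rewrite coefM big_ord_recr big_ord1 /= q1 q1' mulr0 mul0r addr0.
  by rewrite rmorphM hornerM.
Qed.

Section MaximalSubring.
Variables (R : idomainType) (T : comNzRingType) (f : {rmorphism R -> T}).
Hypotheses (f_inj : injective f) (f_max : maximal_subring f) (f_intcl : int_closed_in f).

Lemma sqr_in_image x a : x ^+ 2 = f a -> exists r, x = f r.
Proof.
move=> xa; apply: f_intcl; exists ('X^2 - a%:P); first by rewrite monicXnsubC.
by rewrite /root rmorphB /= map_polyXn map_polyC hornerD hornerN hornerXn hornerC xa subrr.
Qed.

Lemma idempotent_in_image x : x * x = x -> exists r, x = f r.
Proof.
move=> xx; apply: f_intcl; exists ('X^2 - 'X).
  by rewrite monicE lead_coefDl ?lead_coefXn // size_polyXn size_polyN size_polyX.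
by rewrite /root rmorphB /= map_polyXn map_polyX hornerD hornerN hornerXn hornerX expr2 xx subrr.
Qed.

(* Compare R with the intermediate ring R + x^2 T. *)
Lemma mul_image_eq0 c x : c != 0 -> f c * x = 0 -> x = 0.
Proof.
move=> c0 cx0.
have annih r : f c * f r = 0 -> r = 0.
  rewrite -rmorphM -(rmorph0 f) => /f_inj/eqP.
  by rewrite mulf_eq0 (negbTE c0) => /eqP.
pose S z := exists r w, z = f r + x ^+ 2 * w.
have RS r : S (f r) by exists r, 0; rewrite mulr0 addr0.
have [/(_ x) [r [w xE]] | /(_ (x ^+ 2)) x2R] := f_max.2 S (is_subring_image_add_principal f _) RS.
- have r0 : r = 0.
    apply: annih; rewrite (_ : f r = x - x ^+ 2 * w); last by rewrite [X in X - _]xE addrK.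
    by rewrite mulrBr mulrA expr2 mulrA cx0 !mul0r subrr.
  rewrite r0 rmorph0 add0r in xE.
  have [b bE] : exists b, x * w = f b by apply: idempotent_in_image; rewrite [in RHS]xE; ring.
  have b0 : b = 0 by apply: annih; rewrite -bE mulrA cx0 mul0r.
  by rewrite xE expr2 -mulrA bE b0 rmorph0 mulr0.
- have [a aE] : exists a, x ^+ 2 = f a by apply: x2R; exists 0, 1; rewrite rmorph0 add0r mulr1.
  have [b bE] := sqr_in_image aE.
  have b0 : b = 0 by apply: annih; rewrite -bE cx0.
  by rewrite bE b0 rmorph0.
Qed.

(* The ideals [{r | f r \in f c * R[t]_(< n.+1)}] increase with n; once stable, the
   monomial [t ^+ n.+1] reduces modulo lower powers, as [f c] is regular. *)
Lemma almost_integral_in_image c t : noetherian R -> c != 0 ->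
  (forall k, exists r, f c * t ^+ k = f r) -> exists r, t = f r.
Proof.
move=> noethR c0 ctR.
pose J n r := exists2 q : {poly R}, (size q <= n.+1)%N & f r = f c * (map_poly f q).[t].
have idJ n : is_ideal (J n).
  split; first by exists 0; rewrite ?size_poly0 // !rmorph0 horner0 mulr0.
  - move=> x y [q qn xq] [q' q'n yq']; exists (q + q').
      by rewrite (leq_trans (size_polyD _ _)) // geq_max qn q'n.
    by rewrite !rmorphD /= xq yq' hornerD mulrDr.
  - move=> a x [q qn xq]; exists (a *: q); first exact: leq_trans (size_scale_leq _ _) qn.
    by rewrite rmorphM xq map_polyZ hornerZ; ring.
have [N stable] := noethR J idJ (fun n x '(ex_intro2 q qn xq) => ex_intro2 _ _ q (leqW qn) xq).
have [r rE] := ctR N.+1.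
have [q qN rq] : J N r.
  apply: (stable N.+1 r (leqnSn N)); exists 'X^(N.+1); first by rewrite size_polyXn.
  by rewrite -rE map_polyXn hornerXn.
have tN : t ^+ N.+1 - (map_poly f q).[t] = 0.
  by apply: (mul_image_eq0 c0); rewrite mulrBr rE rq subrr.
apply: f_intcl; exists ('X^(N.+1) - q).
  by rewrite monicE lead_coefDl ?lead_coefXn // size_polyXn size_polyN.
by rewrite /root rmorphB /= map_polyXn hornerD hornerN hornerXn tN.
Qed.

Lemma conductor_eq0 x : noetherian R -> conductor f x -> x = 0.
Proof.
move=> noethR xT; have [c cE] := xT 1; rewrite mul1r in cE; rewrite cE.
have [->|c0] := eqVneq c 0; first by rewrite rmorph0.
have [t tR] := f_max.1; exfalso.
have [r rE] : exists r, t = f r.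
  apply: (almost_integral_in_image noethR c0) => k.
  by have [r rE] := xT (t ^+ k); exists r; rewrite mulrC -cE.
exact: tR r rE.
Qed.

(* A field cannot be maximal in T: compare it with [R[t^2, t^3]] for [t] outside R. *)
Lemma image_not_field : ~ forall r : R, r != 0 -> exists a, a * r = 1.
Proof.
move=> Rfield; have [t tR] := f_max.1.
pose S z := exists2 q : {poly R}, q`_1 = 0 & z = (map_poly f q).[t].
have RS r : S (f r) by exists r%:P; rewrite ?coefC // map_polyC hornerC.
have [/(_ t) [q q1 tq] | /(_ (t ^+ 2)) t2R] := f_max.2 S (is_subring_eval_coef1_eq0 f t) RS.
- pose p := 'X - q.
  have p1 : p`_1 = 1 by rewrite coefB coefX q1 subr0.
  have p_neq0 : p != 0 by apply: contra_eq_neq p1 => ->; rewrite coef0 eq_sym oner_neq0.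
  have [a aE] : exists a, a * lead_coef p = 1 by apply: Rfield; rewrite lead_coef_eq0.
  have [r rE] : exists r, t = f r.
    apply: f_intcl; exists (a *: p); first by rewrite monicE lead_coefZ aE.
    by rewrite /root map_polyZ hornerZ rmorphB /= map_polyX hornerD hornerN hornerX -tq subrr mulr0.
  exact: tR r rE.
- have [a aE] : exists a, t ^+ 2 = f a by apply: t2R; exists 'X^2; rewrite ?coefXn // map_polyXn hornerXn.
  by have [r rE] := sqr_in_image aE; apply: tR r rE.
Qed.

Lemma maximal_ideal_neq0 (M : R -> Prop) : is_maximal_ideal M -> exists2 m, M m & m != 0.
Proof.
move=> Mmax; apply: NNPP => M_eq0; apply: image_not_field.
apply: (maximal_ideal0_inv Mmax) => m Mm; apply: NNPP => /eqP m0.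
by apply: M_eq0; exists m.
Qed.

Lemma loc_equal_denominator (P : R -> Prop) t : is_prime_ideal P -> loc_equal f P ->
  exists u a, ~ P u /\ f u * t = f a.
Proof.
move=> [_ nP1 Pmul] Ploc.
have [r [_ [[s [nPs ->]] [_ [[u [nPu ->]] tE]]]]] :=
  Ploc t 1 (ex_intro _ 1 (conj nP1 (esym (rmorph1 f)))).
exists (u * s), (u * r); split; first by move/Pmul => [].
by apply/eqP; rewrite -subr_eq0 !rmorphM; apply/eqP; rewrite -tE; ring.
Qed.

Lemma multiplier_not_stable (I : R -> Prop) m0 t : noetherian R -> I m0 -> m0 != 0 ->
    (forall r, t <> f r) -> (forall m, I m -> exists a, f m * t = f a) ->
  exists m s, [/\ I m, ~ I s & f m * t = f s].
Proof.
move=> noethR Im0 m00 tR ItR; apply: NNPP => stable.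
have ItI m : I m -> exists2 a, I a & f m * t = f a.
  move=> Im; have [a aE] := ItR m Im; exists a => //.
  by apply: NNPP => nIa; apply: stable; exists m, a.
have m0tI k : exists2 m, I m & f m0 * t ^+ k = f m.
  elim: k => [|k [m Im mE]]; first by exists m0; rewrite ?expr0 ?mulr1.
  have [a Ia aE] := ItI m Im; exists a => //.
  by rewrite exprS mulrCA mE mulrC aE.
have [r rE] : exists r, t = f r.
  apply: (almost_integral_in_image noethR m00) => k.
  by have [m _ mE] := m0tI k; exists m.
exact: tR r rE.
Qed.

(* An associated prime of [{r | f r * t0 \in R}], for [t0] outside R, localizes
   R and T differently, so it is the crucial ideal. *)
Lemma crucial_ideal_multiplier M : noetherian R -> crucial_maximal_ideal f M ->
  exists t, (forall r, t <> f r) /\ (forall m, M m -> exists a, f m * t = f a).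
Proof.
move=> noethR [_ _ Mloc]; have [t0 t0R] := f_max.1.
pose D r := exists a, f r * t0 = f a.
have idD : is_ideal D.
  split; first by exists 0; rewrite !rmorph0 mul0r.
  - by move=> x y [a aE] [b bE]; exists (a + b); rewrite !rmorphD mulrDl aE bE.
  - by move=> a x [b bE]; exists (a * b); rewrite !rmorphM -mulrA bE.
have nD1 : ~ D 1 by move=> [a aE]; apply: (t0R a); rewrite -aE rmorph1 mul1r.
have [c nDc Pprime] := associated_prime_exists noethR idD nD1.
have PM : forall x, D (x * c) <-> M x.
  apply: NNPP => PnM; have [u [a [nPu uE]]] := loc_equal_denominator t0 Pprime (Mloc _ Pprime PnM).
  by apply: nPu; apply: idealMr => //; exists a.
exists (f c * t0); split; first by move=> r rE; apply: nDc; exists r.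
by move=> m /PM [a aE]; exists a; rewrite mulrA -rmorphM.
Qed.

Lemma crucial_maximal_ideal_principal M : noetherian R -> crucial_maximal_ideal f M ->
  exists pi s, [/\ M pi, pi != 0, ~ M s & forall m, M m -> exists a, m * s = pi * a].
Proof.
move=> noethR Mcruc; have [t [tR MtR]] := crucial_ideal_multiplier noethR Mcruc.
have [Mmax _ _] := Mcruc; have [m0 Mm0 m00] := maximal_ideal_neq0 Mmax.
have [pi [s [Mpi nMs piE]]] := multiplier_not_stable noethR Mm0 m00 tR MtR.
exists pi, s; split => //.
- apply/eqP => pi0; apply: nMs; move: piE.
  by rewrite pi0 rmorph0 mul0r -(rmorph0 f) => /f_inj <-; case: Mmax => [[]].
- by move=> m /MtR [a aE]; exists a; apply: f_inj; rewrite !rmorphM -aE -piE; ring.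
Qed.
End MaximalSubring.

Local Notation "x %:F" := (@FracField.tofrac _ x).

Lemma fraction_repr (R : idomainType) (x : {fraction R}) :
  exists a b : R, b != 0 /\ x = a%:F / b%:F.
Proof.
elim/quotW: x => y; exists y.1, y.2; split; first exact: denom_ratioP.
rewrite /FracField.tofrac /= -!lock.
rewrite -[_ / _]/(FracField.mul _ (FracField.inv _)) -FracField.pi_inv -FracField.pi_mul.
apply/eqmodP; rewrite /= FracField.equivfE /FracField.mulf /FracField.invf.
have y2 := denom_ratioP y.
rewrite !(numer_Ratio _ (oner_neq0 R)) !(denom_Ratio _ (oner_neq0 R)).
by rewrite !(numer_Ratio _ y2) !(denom_Ratio _ y2) mulr1 mul1r Ratio_numden mulrC.
Qed.

Lemma int_ge0_nat (z : int) : 0 <= z -> exists k : nat, z = k.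
Proof. by case: z => [k _ | //]; exists k. Qed.

Section PrincipalMaximalIdeal.
Variables (R : idomainType) (M : R -> Prop) (pi s : R).
Hypotheses (noethR : noetherian R) (Mmax : is_maximal_ideal M).
Hypotheses (Mpi : M pi) (pi_neq0 : pi != 0) (nMs : ~ M s).
Hypothesis Mpi_s : forall m, M m -> exists a, m * s = pi * a.

Let Mideal : is_ideal M. Proof. by case: Mmax. Qed.
Let nM1 : ~ M 1. Proof. by case: Mmax. Qed.

Lemma notM_mul a b : ~ M a -> ~ M b -> ~ M (a * b).
Proof. by case: (maximal_ideal_prime Mmax) => _ _ Mmul na nb /Mmul []. Qed.

Lemma notM_neq0 u : ~ M u -> u != 0.
Proof. by apply: contra_not_neq => ->; case: Mideal. Qed.

Lemma M_pi_power k w : (0 < k)%N -> M (pi ^+ k * w).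
Proof. by case: k => // k _; rewrite exprS -mulrA; apply: idealMr. Qed.

(* Krull's intersection theorem for the principal ideal [pi R_M]: the ideals
   [{x | x pi^n \in r R_M}] increase, and their stabilization yields a unit in [pi R_M]. *)
Lemma pi_powers_not_all_divide r : r != 0 ->
  ~ forall n, exists u a, ~ M u /\ r * u = pi ^+ n * a.
Proof.
move=> r0 rpi.
pose J n x := exists u b, ~ M u /\ x * u * pi ^+ n = r * b.
have idJ n : is_ideal (J n).
  split; first by exists 1, 0; rewrite !mul0r mulr0.
  - move=> x y [u [b [nu xE]]] [u' [b' [nu' yE]]].
    exists (u * u'), (b * u' + b' * u); split; first exact: notM_mul.
    by rewrite mulrDr !mulrA -xE -yE; ring.
  - move=> c x [u [b [nu xE]]]; exists u, (c * b); split => //.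
    by rewrite mulrCA -xE; ring.
have incJ n x : J n x -> J n.+1 x.
  by move=> [u [b [nu xE]]]; exists u, (b * pi); rewrite exprSr mulrA xE mulrA.
have [N stable] := noethR idJ incJ.
have [u [a [nu rE]]] := rpi N.+1.
have [v [b [nv aE]]] : J N a.
  by apply: (stable N.+1 a (leqnSn N)); exists 1, u; split => //; rewrite mulr1 rE mulrC.
have /eqP : r * (u * v - pi * b) = 0.
  by rewrite mulrBr mulrA rE mulrCA -aE exprS; ring.
rewrite mulf_eq0 (negbTE r0) /= subr_eq0 => /eqP uvE.
by apply: (notM_mul nu nv); rewrite uvE; apply: idealMr.
Qed.

Lemma pi_power_factorization r : r != 0 ->
  exists (n : nat) u w, [/\ ~ M u, ~ M w & r * u = pi ^+ n * w].
Proof.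
move=> r0; apply: NNPP => nofact; apply: (pi_powers_not_all_divide r0).
elim=> [|n [u [a [nu rE]]]]; first by exists 1, r; rewrite mulr1 expr0 mul1r.
case: (classic (M a)) => Ma; last by case: nofact; exists n, u, a.
have [a' aE] := Mpi_s Ma; exists (u * s), a'; split; first exact: notM_mul.
by rewrite mulrA rE -mulrA aE exprSr; ring.
Qed.

Definition has_order (x : {fraction R}) (n : int) :=
  exists u w, [/\ ~ M u, ~ M w & x * u%:F = pi%:F ^ n * w%:F].

Let pi_F_neq0 : pi%:F != 0. Proof. by rewrite tofrac_eq0. Qed.

Let unit_F_neq0 u : ~ M u -> u%:F != 0.
Proof. by move/notM_neq0; rewrite tofrac_eq0. Qed.

Lemma has_order_tofrac r (n : nat) u w : ~ M u -> ~ M w -> r * u = pi ^+ n * w ->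
  has_order r%:F n.
Proof. by move=> nu nw rE; exists u, w; rewrite -exprnP -rmorphXn -!rmorphM rE. Qed.

Lemma has_orderM x y n m : has_order x n -> has_order y m -> has_order (x * y) (n + m).
Proof.
move=> [u [w [nu nw xE]]] [u' [w' [nu' nw' yE]]].
exists (u * u'), (w * w'); split; try exact: notM_mul.
by rewrite !rmorphM expfzDr // mulrACA xE yE mulrACA.
Qed.

Lemma has_orderV x n : has_order x n -> has_order x^-1 (- n).
Proof.
move=> [u [w [nu nw xE]]]; exists w, u; split => //.
have x0 : x != 0.
  apply: contra_neq (mulf_neq0 (expfz_neq0 n pi_F_neq0) (unit_F_neq0 nw)) => x0.
  by rewrite -xE x0 mul0r.
apply: (mulfI x0); rewrite mulrA divff // mul1r mulrCA xE mulrA -expfzDr //.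
by rewrite addNr expr0z mul1r.
Qed.

Lemma has_order_uniq x n m : x != 0 -> has_order x n -> has_order x m -> n = m.
Proof.
move=> x0; wlog le_nm : n m / n <= m => [hwlog xn xm|].
  by case: (lerP n m) => [le_nm | /ltW le_mn]; [apply: hwlog | apply/esym/hwlog].
move=> [u [w [nu nw xE]]] [u' [w' [nu' nw' xE']]].
have [k kE] : exists k : nat, m - n = k by apply: int_ge0_nat; rewrite subr_ge0.
have mE : m = n + k by rewrite -kE addrC subrK.
have /eqP : (w * u')%:F = (pi ^+ k * w' * u)%:F.
  apply: (mulfI (expfz_neq0 n pi_F_neq0)); rewrite !rmorphM rmorphXn /=.
  have -> : pi%:F ^ n * (w%:F * u'%:F) = x * u%:F * u'%:F by rewrite xE; ring.
  by rewrite exprnP !mulrA -expfzDr // -mE -xE'; ring.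
rewrite tofrac_eq => /eqP wuE.
case: k kE mE wuE => [_ -> _ | k _ _ wuE]; first by rewrite addr0.
by case: (notM_mul nw nu'); rewrite wuE -mulrA; apply: M_pi_power.
Qed.

Lemma has_order_exists x : x != 0 -> exists n, has_order x n.
Proof.
move=> x0; have [a [b [b0 xE]]] := fraction_repr x.
have a0 : a != 0 by apply: contra_neq x0 => a0; rewrite xE a0 tofrac0 mul0r.
have [na [u [w [nu nw aE]]]] := pi_power_factorization a0.
have [nb [u' [w' [nu' nw' bE]]]] := pi_power_factorization b0.
exists (na%:Z + - nb%:Z); rewrite xE.
exact: has_orderM (has_order_tofrac nu nw aE) (has_orderV (has_order_tofrac nu' nw' bE)).
Qed.

Definition ord x := epsilon (inhabits 0) (has_order x).

Lemma ordP x : x != 0 -> has_order x (ord x).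
Proof. by move/has_order_exists; apply: epsilon_spec. Qed.

Lemma ord_eq x n : x != 0 -> has_order x n -> ord x = n.
Proof. by move=> x0; apply: has_order_uniq x0 (ordP x0). Qed.

Lemma ordM x y : x != 0 -> y != 0 -> ord (x * y) = ord x + ord y.
Proof. by move=> x0 y0; apply: ord_eq (has_orderM (ordP x0) (ordP y0)); rewrite mulf_neq0. Qed.

Lemma ordV x : x != 0 -> ord x^-1 = - ord x.
Proof. by move=> x0; apply: ord_eq (has_orderV (ordP x0)); rewrite invr_eq0. Qed.

Lemma ord_pi_power n : ord (pi%:F ^ n) = n.
Proof.
by apply: ord_eq; [exact: expfz_neq0 | exists 1, 1; rewrite !rmorph1 !mulr1].
Qed.

Lemma ord_unit u : ~ M u -> ord u%:F = 0.
Proof.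
by move=> nu; apply: ord_eq (unit_F_neq0 nu) _; exists 1, u; rewrite expr0z rmorph1 mulr1 mul1r.
Qed.

Lemma ord_tofrac_ge0 r : r != 0 -> 0 <= ord r%:F.
Proof.
move=> r0; have [n [u [w [nu nw rE]]]] := pi_power_factorization r0.
by rewrite (ord_eq _ (has_order_tofrac nu nw rE)) ?tofrac_eq0.
Qed.

Lemma loc_in_frac_ord x : x != 0 -> loc_in_frac M x <-> 0 <= ord x.
Proof.
move=> x0; split=> [[a [t [nt xE]]] | ord_ge0].
  have a0 : a != 0 by apply: contra_neq x0 => a0; rewrite xE a0 tofrac0 mul0r.
  have aF0 : a%:F != 0 by rewrite tofrac_eq0.
  have tF0 := unit_F_neq0 nt.
  rewrite xE ordM ?invr_eq0 // ordV // (ord_unit nt) subr0.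
  exact: ord_tofrac_ge0.
have [k kE] := int_ge0_nat ord_ge0; have [u [w [nu nw xE]]] := ordP x0; rewrite kE in xE.
exists (pi ^+ k * w), u; split => //.
by rewrite rmorphM rmorphXn; apply: (mulIf (unit_F_neq0 nu)); rewrite divfK ?unit_F_neq0.
Qed.

Lemma ord_add_ge x y : x != 0 -> y != 0 -> x + y != 0 -> ord x <= ord y -> ord x <= ord (x + y).
Proof.
move=> x0 y0 xy0 le_xy.
have xyE : x + y = x * (1 + y / x) by rewrite mulrDr mulr1 mulrCA divff ?mulr1.
have z0 : 1 + y / x != 0 by apply: contra_neq xy0 => z0; rewrite xyE z0 mulr0.
rewrite xyE ordM // lerDl; apply/loc_in_frac_ord => //.
have /loc_in_frac_ord [|a [t [nt yxE]]] : 0 <= ord (y / x).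
- by rewrite ordM ?ordV ?invr_eq0 // subr_ge0.
- by rewrite mulf_neq0 ?invr_eq0.
exists (t + a), t; split => //.
by rewrite yxE rmorphD mulrDl divff ?unit_F_neq0.
Qed.

Lemma loc_in_frac_DVR : is_DVR_in_frac (loc_in_frac M).
Proof.
exists ord; split; first split.
- exact: ordM.
- move=> x y x0 y0 xy0; rewrite ge_min.
  have [le_xy | /ltW le_yx] := lerP (ord x) (ord y); first by rewrite ord_add_ge.
  by rewrite addrC ord_add_ge ?orbT // addrC.
- by move=> n; exists (pi%:F ^ n); rewrite expfz_neq0 ?ord_pi_power.
- move=> x; have [-> | x0] := eqVneq x 0.
    by split=> [_ | _]; [left | exists 0, 1; rewrite tofrac0 mul0r].
  split=> [/(loc_in_frac_ord x0) ord_ge0 | [x_eq0 | [_ /(loc_in_frac_ord x0) //]]].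
    by right.
  by rewrite x_eq0 eqxx in x0.
Qed.

End PrincipalMaximalIdeal.

Unset Implicit Arguments.

Theorem proposition3p12 (R : idomainType) (T : comNzRingType)
    (f : {rmorphism R -> T}) (M : R -> Prop) :
  injective f ->
  normal_domain R ->
  noetherian R ->
  maximal_subring f ->
  int_closed_in f ->
  crucial_maximal_ideal f M ->
  (forall x : T, conductor f x -> x = 0) /\ is_DVR_in_frac (loc_in_frac M).
Proof.
move=> f_inj _ noethR f_max f_intcl Mcruc; split.
  by move=> x; apply: conductor_eq0.
have [pi [s [Mpi pi_neq0 nMs Mpi_s]]] :=
  crucial_maximal_ideal_principal f_inj f_max f_intcl noethR Mcruc.
have [Mmax _ _] := Mcruc.
exact: loc_in_frac_DVR noethR Mmax Mpi pi_neq0 nMs Mpi_s.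
Qed.
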